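(* For each integer $r\ge 1$, let $G_r = (rK_1 \cup (K_1 \nabla (r+1)K_1)) \nabla (rK_1 \cup (K_1 \nabla (r+1)K_1))$, a graph of order $4r+4$. Then $LE(G_r)=LE(K_{4r+4})=8r+6$ (i.e. $G_r$ is $L$-borderenergetic), and $G_r$ and $K_{4r+4}$ have different Laplacian spectra.
   Context: All graphs are finite, simple and undirected. The Laplacian matrix of $G$ is $L(G)=D-A$ ($D$ degree matrix, $A$ adjacency matrix). For a graph $G$ on $n$ vertices with Laplacian eigenvalues $\mu_1,\dots,\mu_n$ and average degree $\overline d = 2|E(G)|/n$, the Laplacian energy is $LE(G)=\sum_{i=1}^n|\mu_i-\overline d|$. One has $LE(K_n)=2n-2$. A graph $G$ on $n$ vertices is $L$-borderenergetic if $LE(G)=LE(K_n)$. $K_m$ is the complete graph on $m$ vertices, $mG$ is the disjoint union of $m$ copies of $G$, $G_1\cup G_2$ is the disjoint union, and the join $G_1\nabla G_2$ is obtained from $G_1\cup G_2$ by adding all edges between a vertex of $G_1$ and a vertex of $G_2$. *)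

From HB Require Import structures.
From mathcomp Require Import all_boot all_order all_algebra all_field.
Set Implicit Arguments. Unset Strict Implicit. Unset Printing Implicit Defensive.
Import Order.TTheory GRing.Theory Num.Theory.
Local Open Scope ring_scope.

(* A (finite) graph: a finite vertex type and an adjacency relation.
   All graphs built below are simple (symmetric, irreflexive). *)
Record graph := Graph { vert : finType; adj : rel vert }.

Definition gorder (G : graph) : nat := #|vert G|.

Definition K1 : graph := @Graph unit (fun _ _ => false).
Definition empty_graph (m : nat) : graph := @Graph 'I_m (fun _ _ => false).
Definition complete (n : nat) : graph := @Graph 'I_n (fun i j => i != j).

Definition gunion (G H : graph) : graph :=
  @Graph (vert G + vert H)%type
    (fun x y => match x, y with
                | inl a, inl b => adj a b
                | inr a, inr b => adj a b
                | _, _ => false end).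

Definition gjoin (G H : graph) : graph :=
  @Graph (vert G + vert H)%type
    (fun x y => match x, y with
                | inl a, inl b => adj a b
                | inr a, inr b => adj a b
                | _, _ => true end).

Definition degree (G : graph) (x : vert G) : nat := #|[pred y | adj x y]|.

Definition laplacian (G : graph) : 'M[algC]_(gorder G) :=
  \matrix_(i, j)
    ((if i == j then (degree (enum_val i))%:R else 0)
     - (adj (enum_val i) (enum_val j))%:R).

(* Laplacian spectrum: the roots (with multiplicity) of the characteristic
   polynomial of L (monic, so lead_coef = 1). *)
Definition lspec (G : graph) : seq algC :=
  sval (closed_field_poly_normal (char_poly (laplacian G))).

Definition avg_degree (G : graph) : algC :=
  (\sum_(x : vert G) (degree x)%:R) / (gorder G)%:R.

Definition LE (G : graph) : algC :=
  \sum_(mu <- lspec G) `|mu - avg_degree G|.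

Definition Hr (r : nat) : graph :=
  gunion (empty_graph r) (gjoin K1 (empty_graph r.+1)).
Definition Gr (r : nat) : graph := gjoin (Hr r) (Hr r).

From HB Require Import structures.
From mathcomp Require Import all_boot all_order all_algebra all_field.
From mathcomp Require Import ring zify.
Set Implicit Arguments. Unset Strict Implicit. Unset Printing Implicit Defensive.
Import Order.TTheory GRing.Theory Num.Theory.
Local Open Scope ring_scope.

(* Both G_r and K_n have an orthogonal basis of left Laplacian eigenvectors
   containing the all-ones vector, and such bases pass to disjoint unions and
   joins: the two all-ones vectors are traded for the all-ones vector of the
   whole graph (eigenvalue 0) and the contrast vector |H| 1_G - |G| 1_H
   (eigenvalue 0 for a union, |G| + |H| for a join); the other eigenvectors are
   padded with zeros, and in a join their eigenvalues are shifted by the order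
   of the other part.  This yields the spectra explicitly: K_n has 0 and n
   (n - 1 times), while G_r has 0, 4r + 4, 3r + 4 (twice), and 2r + 2, 2r + 3
   (2r times each).  With average degrees 2r + 3 and 4r + 3, both Laplacian
   energies are 8r + 6, and 2r + 2 is an eigenvalue of G_r only. *)

Lemma char_poly_similar (F : fieldType) n (P A B : 'M[F]_n) :
  \det P != 0 -> P *m A = B *m P -> char_poly A = char_poly B.
Proof.
move=> detP PA.
have E : map_mx polyC P *m char_poly_mx A = char_poly_mx B *m map_mx polyC P.
  by rewrite /char_poly_mx mulmxBr mulmxBl mul_mx_scalar mul_scalar_mx -!map_mxM PA.
move/(congr1 determinant): E; rewrite !det_mulmx det_map_mx mulrC.
by apply: mulIf; rewrite polyC_eq0.
Qed.

Lemma trace_similar (F : fieldType) n (P A B : 'M[F]_n) :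
  \det P != 0 -> P *m A = B *m P -> \tr A = \tr B.
Proof.
move=> detP PA; have uP : P \in unitmx by rewrite unitmxE unitfE.
have -> : A = invmx P *m (B *m P) by rewrite -PA mulmxA mulVmx ?mul1mx.
by rewrite mxtrace_mulC -mulmxA mulmxV ?mulmx1.
Qed.

Definition lap (G : graph) (x y : vert G) : algC :=
  (if x == y then (degree x)%:R else 0) - (adj x y)%:R.

Definition lap_row (G : graph) (q : vert G -> algC) (y : vert G) : algC :=
  \sum_x q x * lap x y.

Definition dotv (T : finType) (p q : T -> algC) : algC := \sum_x p x * q x.

Record lap_eigenbasis (G : graph) (x0 : vert G)
    (b : vert G -> vert G -> algC) (lam : vert G -> algC) : Prop := {
  eigenbasis_root : forall y, b x0 y = 1;
  eigenvalue_root : lam x0 = 0;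
  eigenbasis_eigen : forall x y, lap_row (b x) y = lam x * b x y;
  eigenbasis_ortho : forall x x', x != x' -> dotv (b x) (b x') = 0;
  eigenbasis_norm : forall x, dotv (b x) (b x) != 0 }.

Lemma dotvC (T : finType) (p q : T -> algC) : dotv p q = dotv q p.
Proof. by apply: eq_bigr => x _; rewrite mulrC. Qed.

Lemma sum_enum_val (T : finType) (F : T -> algC) :
  \sum_(i < #|T|) F (enum_val i) = \sum_x F x.
Proof. by rewrite (big_enum_val F). Qed.

Lemma trace_laplacian (G : graph) : irreflexive (@adj G) ->
  \tr (laplacian G) = \sum_(x : vert G) (degree x)%:R.
Proof.
move=> irr; rewrite /mxtrace -[RHS]sum_enum_val; apply: eq_bigr => i _.
by rewrite mxE eqxx irr subr0.
Qed.

Section Eigenbasis.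

Variables (G : graph) (x0 : vert G) (b : vert G -> vert G -> algC) (lam : vert G -> algC).
Hypothesis eb : lap_eigenbasis x0 b lam.

Let P : 'M[algC]_(gorder G) := \matrix_(i, j) b (enum_val i) (enum_val j).
Let D : 'M[algC]_(gorder G) := diag_mx (\row_i lam (enum_val i)).

Lemma eigenbasis_mx_similar : P *m laplacian G = D *m P.
Proof.
apply/matrixP => i j; rewrite mul_diag_mx !mxE -(eigenbasis_eigen eb).
rewrite /lap_row -[RHS]sum_enum_val; apply: eq_bigr => k _.
by rewrite !mxE /lap (inj_eq enum_val_inj).
Qed.

Lemma det_eigenbasis_mx : \det P != 0.
Proof.
have PPt : P *m P^T = diag_mx (\row_i dotv (b (enum_val i)) (b (enum_val i))).
  apply/matrixP => i j; rewrite !mxE.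
  have -> : \sum_k P i k * P^T k j = dotv (b (enum_val i)) (b (enum_val j)).
    by rewrite /dotv -[RHS]sum_enum_val; apply: eq_bigr => k _; rewrite !mxE.
  have [->|ij] := eqVneq i j; first by rewrite mulr1n.
  by rewrite mulr0n (eigenbasis_ortho eb) // (inj_eq enum_val_inj).
have : \det (P *m P^T) != 0.
  by rewrite PPt det_diag; apply/prodf_neq0 => i _; rewrite mxE (eigenbasis_norm eb).
by rewrite det_mulmx; apply: contra => /eqP ->; rewrite mul0r.
Qed.

Lemma char_poly_laplacian : char_poly (laplacian G) = \prod_x ('X - (lam x)%:P).
Proof.
rewrite (char_poly_similar det_eigenbasis_mx eigenbasis_mx_similar).
rewrite char_poly_trig ?diag_mx_is_trig // (big_enum_val (fun x => 'X - (lam x)%:P)).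
by apply: eq_bigr => i _; rewrite !mxE eqxx mulr1n.
Qed.

Lemma trace_laplacian_eigen : \tr (laplacian G) = \sum_x lam x.
Proof.
rewrite (trace_similar det_eigenbasis_mx eigenbasis_mx_similar) mxtrace_diag.
by rewrite -sum_enum_val; apply: eq_bigr => i _; rewrite mxE.
Qed.

Lemma lspec_eigenbasis : perm_eq (lspec G) [seq lam x | x <- enum (vert G)].
Proof.
rewrite /lspec; case: (closed_field_poly_normal _) => s /= Hs.
apply: prod_XsubC_eq; rewrite big_map big_enum /= -char_poly_laplacian.
by rewrite Hs (monicP (char_poly_monic _)) scale1r.
Qed.

Lemma lap_row_const k (y : vert G) : lap_row (fun _ => k) y = 0.
Proof.
transitivity (k * lap_row (b x0) y).
  by rewrite /lap_row mulr_sumr; apply: eq_bigr => x _; rewrite (eigenbasis_root eb) mulrA mulr1.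
by rewrite (eigenbasis_eigen eb) (eigenvalue_root eb) mul0r mulr0.
Qed.

Lemma eigenbasis_sum0 x : x != x0 -> \sum_y b x y = 0.
Proof.
move=> xx0; transitivity (dotv (b x) (b x0)); last exact: (eigenbasis_ortho eb).
by apply: eq_bigr => y _; rewrite (eigenbasis_root eb) mulr1.
Qed.

Lemma LE_eigenbasis : irreflexive (@adj G) ->
  LE G = \sum_x `|lam x - (\sum_y lam y) / (gorder G)%:R|.
Proof.
move=> irr; rewrite /LE /avg_degree -trace_laplacian // trace_laplacian_eigen.
by rewrite (perm_big _ lspec_eigenbasis) big_map big_enum.
Qed.

End Eigenbasis.

Lemma lap_rowE (G : graph) (q : vert G -> algC) y :
  lap_row q y = q y * (degree y)%:R - \sum_x q x * (adj x y)%:R.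
Proof.
rewrite /lap_row /lap; under eq_bigr do rewrite mulrBr.
by rewrite sumrB (bigD1 y) //= eqxx big1 ?addr0 // => x /negbTE ->; rewrite mulr0.
Qed.

Lemma natr_degree (G : graph) (x : vert G) :
  (degree x)%:R = \sum_y (adj x y)%:R :> algC.
Proof.
rewrite /degree -sum1_card natr_sum big_mkcond /=.
by apply: eq_bigr => y _; rewrite inE; case: (adj x y).
Qed.

Lemma lap_row_union_l (G H : graph) (q : vert (gunion G H) -> algC) y :
  lap_row q (inl y) = lap_row (fun x => q (inl x)) y.
Proof.
rewrite !lap_rowE !natr_degree !big_sumType /= [\sum_i 0]big1_eq.
by rewrite [\sum_i q (inr i) * 0]big1 ?addr0 // => x _; rewrite mulr0.
Qed.

Lemma lap_row_union_r (G H : graph) (q : vert (gunion G H) -> algC) y :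
  lap_row q (inr y) = lap_row (fun x => q (inr x)) y.
Proof.
rewrite !lap_rowE !natr_degree !big_sumType /= [\sum_i 0]big1_eq.
by rewrite [\sum_i q (inl i) * 0]big1 ?add0r // => x _; rewrite mulr0.
Qed.

Lemma lap_row_join_l (G H : graph) (q : vert (gjoin G H) -> algC) y :
  lap_row q (inl y) =
  lap_row (fun x => q (inl x)) y + q (inl y) * #|vert H|%:R - \sum_x q (inr x).
Proof.
rewrite !lap_rowE !natr_degree !big_sumType /= sumr_const.
under [\sum_x (q (inr x) * _)]eq_bigr do rewrite mulr1.
by rewrite mulrDr; ring.
Qed.

Lemma lap_row_join_r (G H : graph) (q : vert (gjoin G H) -> algC) y :
  lap_row q (inr y) =
  lap_row (fun x => q (inr x)) y + q (inr y) * #|vert G|%:R - \sum_x q (inl x).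
Proof.
rewrite !lap_rowE !natr_degree !big_sumType /= sumr_const.
under [\sum_x (q (inl x) * _)]eq_bigr do rewrite mulr1.
by rewrite mulrDr; ring.
Qed.

Section UnionJoin.

Variables (G H : graph) (x0 : vert G) (y0 : vert H).
Variables (bG : vert G -> vert G -> algC) (bH : vert H -> vert H -> algC).
Variables (lG : vert G -> algC) (lH : vert H -> algC).
Hypotheses (ebG : lap_eigenbasis x0 bG lG) (ebH : lap_eigenbasis y0 bH lH).

Let nG : algC := #|vert G|%:R.
Let nH : algC := #|vert H|%:R.

(* The all-ones vector and the contrast vector [nH * 1_G - nG * 1_H] replace the
   two roots; every other basis vector is extended by zero. *)
Definition comb_basis (z w : vert G + vert H) : algC :=
  match z, w with
  | inl x, inl x' => bG x x'
  | inl x, inr _ => (x == x0)%:R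
  | inr y, inl _ => (y == y0)%:R * nH
  | inr y, inr y' => if y == y0 then - nG else bH y y'
  end.

Lemma nG_gt0 : 0 < nG.
Proof. by rewrite ltr0n; apply/card_gt0P; exists x0. Qed.

Lemma nH_gt0 : 0 < nH.
Proof. by rewrite ltr0n; apply/card_gt0P; exists y0. Qed.

Lemma dotv_sum (p q : vert G + vert H -> algC) :
  dotv p q = dotv (fun x => p (inl x)) (fun x => q (inl x)) +
             dotv (fun y => p (inr y)) (fun y => q (inr y)).
Proof. exact: big_sumType. Qed.

Lemma sum_const_G c : \sum_(x : vert G) c = c * nG.
Proof. by rewrite sumr_const -mulr_natr. Qed.

Lemma sum_const_H c : \sum_(y : vert H) c = c * nH.
Proof. by rewrite sumr_const -mulr_natr. Qed.

Lemma sum_root_G : \sum_x bG x0 x = nG.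
Proof. by under eq_bigr do rewrite (eigenbasis_root ebG); rewrite sum_const_G mul1r. Qed.

Lemma comb_basis_ortho_lr x y :
  dotv (comb_basis (inl x)) (comb_basis (inr y)) = 0.
Proof.
rewrite dotv_sum /dotv /= -mulr_sumr -mulr_suml.
have [->|xx0] := eqVneq x x0; last first.
  by rewrite (eigenbasis_sum0 ebG) // mulr0n !mul0r add0r.
rewrite mulr1n mul1r sum_root_G; case: eqVneq => [_|yy0].
  by rewrite sum_const_H mulr1n mul1r; ring.
by rewrite mulr0n mul0r mulr0 add0r (eigenbasis_sum0 ebH).
Qed.

Lemma comb_basis_ortho z z' :
  z != z' -> dotv (comb_basis z) (comb_basis z') = 0.
Proof.
case: z z' => [x|y] [x'|y'] /= zz'.
- rewrite dotv_sum (eigenbasis_ortho ebG) // add0r /dotv big1 // => ? _ /=.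
  have [xx0|_] := eqVneq x x0; last by rewrite mulr0n mul0r.
  have x'x0 : x' != x0 by rewrite -xx0 eq_sym.
  by rewrite (negbTE x'x0) mulr0n mulr0.
- exact: comb_basis_ortho_lr.
- by rewrite dotvC comb_basis_ortho_lr.
- wlog yy0 : y y' zz' / y != y0.
    move=> W; have [eyy0|] := eqVneq y y0; last exact: W.
    by rewrite dotvC W // eq_sym // -eyy0.
  rewrite dotv_sum /dotv [X in X + _]big1 => [|? _] /=; last first.
    by rewrite (negbTE yy0) mulr0n !mul0r.
  rewrite add0r (negbTE yy0); have [_|y'y0] := eqVneq y' y0.
    by rewrite -mulr_suml (eigenbasis_sum0 ebH) // mul0r.
  exact: (eigenbasis_ortho ebH).
Qed.

Lemma comb_basis_norm z : dotv (comb_basis z) (comb_basis z) != 0.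
Proof.
have gG := nG_gt0; have gH := nH_gt0.
case: z => [x|y].
- have [->|xx0] := eqVneq x x0; rewrite dotv_sum /dotv /=.
    rewrite (eq_bigr (fun _ => 1)) => [|x' _]; last by rewrite (eigenbasis_root ebG) mulr1.
    by rewrite eqxx sum_const_G sum_const_H mulr1n !mul1r lt0r_neq0 ?addr_gt0.
  by rewrite (negbTE xx0) sum_const_H mulr0n mul0r mul0r addr0 (eigenbasis_norm ebG).
- have [->|yy0] := eqVneq y y0; rewrite dotv_sum /dotv /=.
    rewrite eqxx !sum_const_G !sum_const_H mulr1n !mul1r mulrNN lt0r_neq0 //.
    by apply: addr_gt0; apply: mulr_gt0 => //; apply: mulr_gt0.
  by rewrite (negbTE yy0) sum_const_G mulr0n !mul0r add0r (eigenbasis_norm ebH).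
Qed.

Lemma comb_basis_root w : comb_basis (inl x0) w = 1.
Proof. by case: w => [x|y] /=; rewrite ?(eigenbasis_root ebG) ?eqxx. Qed.

Definition union_eigval (z : vert G + vert H) : algC :=
  match z with inl x => lG x | inr y => lH y end.

Definition join_eigval (z : vert G + vert H) : algC :=
  match z with
  | inl x => if x == x0 then 0 else lG x + nH
  | inr y => if y == y0 then nG + nH else lH y + nG
  end.

Lemma eigenbasis_union :
  lap_eigenbasis (G := gunion G H) (inl x0) comb_basis union_eigval.
Proof.
split; [exact: comb_basis_root | exact: (eigenvalue_root ebG) | |
  exact: comb_basis_ortho | exact: comb_basis_norm].
case=> [x|y] [x'|y']; rewrite ?lap_row_union_l ?lap_row_union_r /=.
- exact: (eigenbasis_eigen ebG).
- have [->|_] := eqVneq x x0; last by rewrite (lap_row_const ebH) mulr0.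
  by rewrite (lap_row_const ebH) (eigenvalue_root ebG) mul0r.
- have [->|_] := eqVneq y y0; last by rewrite (lap_row_const ebG) mulr0n mul0r mulr0.
  by rewrite (lap_row_const ebG) (eigenvalue_root ebH) mul0r.
- have [->|_] := eqVneq y y0; last exact: (eigenbasis_eigen ebH).
  by rewrite (lap_row_const ebH) (eigenvalue_root ebH) mul0r.
Qed.

Lemma eigenbasis_join :
  lap_eigenbasis (G := gjoin G H) (inl x0) comb_basis join_eigval.
Proof.
split; [exact: comb_basis_root | by rewrite /= eqxx | |
  exact: comb_basis_ortho | exact: comb_basis_norm].
case=> [x|y] [x'|y']; rewrite ?lap_row_join_l ?lap_row_join_r /= -/nG -/nH.
- have [->|_] := eqVneq x x0.
    rewrite (eigenbasis_eigen ebG) (eigenvalue_root ebG) (eigenbasis_root ebG).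
    by rewrite sum_const_H mulr1n; ring.
  rewrite (eigenbasis_eigen ebG) big1 => [|? _]; last by rewrite mulr0n.
  ring.
- have [->|xx0] := eqVneq x x0.
    by rewrite (lap_row_const ebH) sum_root_G mulr1n; ring.
  by rewrite (lap_row_const ebH) mulr0n (eigenbasis_sum0 ebG) //; ring.
- have [_|yy0] := eqVneq y y0.
    by rewrite (lap_row_const ebG) sum_const_H mulr1n; ring.
  by rewrite (lap_row_const ebG) mulr0n (eigenbasis_sum0 ebH) //; ring.
- have [_|_] := eqVneq y y0; rewrite /=.
    by rewrite (lap_row_const ebH) sum_const_G mulr1n; ring.
  rewrite (eigenbasis_eigen ebH) big1 => [|x _]; last by rewrite mulr0n mul0r.
  ring.
Qed.

End UnionJoin.

Lemma lap_row_edgeless (G : graph) (q : vert G -> algC) y :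
  (forall x x' : vert G, ~~ adj x x') -> lap_row q y = 0.
Proof.
move=> noE; rewrite lap_rowE natr_degree !big1 ?mulr0 ?subr0 // => x _.
  by rewrite (negbTE (noE _ _)) mulr0.
by rewrite (negbTE (noE _ _)).
Qed.

Lemma eigenbasis_edgeless (G : graph) (x0 : vert G) (b : vert G -> vert G -> algC) :
  (forall x x' : vert G, ~~ adj x x') -> (forall y, b x0 y = 1) ->
  (forall x x', x != x' -> dotv (b x) (b x') = 0) -> (forall x, dotv (b x) (b x) != 0) ->
  lap_eigenbasis x0 b (fun _ => 0).
Proof.
move=> noE root ortho norm; split=> // x y.
by rewrite lap_row_edgeless // mul0r.
Qed.

Lemma eigenbasis_K1 : lap_eigenbasis (G := K1) tt (fun _ _ => 1) (fun _ => 0).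
Proof.
apply: eigenbasis_edgeless => // _.
by rewrite /dotv sumr_const card_unit mulr1 oner_eq0.
Qed.

(* The Helmert basis of [algC ^ n.+1]: the all-ones vector and, for [0 < k],
   the vector [1, ..., 1, -k, 0, ..., 0] with [k] leading ones. *)
Definition helmert n (k y : 'I_n.+1) : algC :=
  if k == ord0 then 1 else (y < k)%:R - (y == k)%:R * k%:R.

Lemma sum_ltn_ord N k : \sum_(y < N) ((y < k)%:R : algC) = (minn k N)%:R.
Proof.
elim: N => [|N IH]; first by rewrite big_ord0 minn0.
by rewrite big_ord_recr /= IH -natrD; congr _%:R; case: ltnP => /= ?; lia.
Qed.

Lemma sum_eq_mul (T : finType) (k : T) (F : T -> algC) :
  \sum_x (x == k)%:R * F x = F k.
Proof. by rewrite (bigD1 k) //= eqxx mul1r big1 ?addr0 // => x /negbTE ->; rewrite mul0r. Qed.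

Lemma sum_neq_mul (T : finType) (k : T) (F : T -> algC) :
  \sum_x (x != k)%:R * F x = \sum_x F x - F k.
Proof.
rewrite -(sum_eq_mul k F) -sumrB; apply: eq_bigr => x _.
by case: (x =P k) => _ /=; rewrite ?mul0r ?mul1r ?subrr ?subr0.
Qed.

Lemma helmert0 n (y : 'I_n.+1) : helmert ord0 y = 1.
Proof. by rewrite /helmert eqxx. Qed.

Lemma sum_helmert n (k : 'I_n.+1) : k != ord0 -> \sum_y helmert k y = 0.
Proof.
move=> /negbTE k0; rewrite /helmert k0 sumrB sum_ltn_ord (sum_eq_mul k (fun _ => k%:R)).
by rewrite (minn_idPl (ltnW (ltn_ord k))) subrr.
Qed.

Lemma helmert_ortho n (k k' : 'I_n.+1) : k != k' -> dotv (helmert k) (helmert k') = 0.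
Proof.
wlog lt_kk' : k k' / (k < k')%N.
  move=> W kk'; case: (ltngtP k k') => [lt_kk'|gt_kk'|/val_inj eq_kk'].
  - exact: W.
  - by rewrite dotvC W // eq_sym.
  - by rewrite eq_kk' eqxx in kk'.
move=> _; have k'0 : k' != ord0 by rewrite -val_eqE /= -lt0n (leq_ltn_trans _ lt_kk').
have [->|k0] := eqVneq k ord0.
  by rewrite -(sum_helmert k'0); apply: eq_bigr => y _; rewrite helmert0 mul1r.
rewrite -(sum_helmert k0); apply: eq_bigr => y _.
have [le_yk|lt_ky] := leqP y k.
  have lt_yk' := leq_ltn_trans le_yk lt_kk'.
  rewrite {2}/helmert (negbTE k'0) lt_yk' (ltn_eqF lt_yk' : (y == k') = false).
  by rewrite mul0r subr0 mulr1.
rewrite /helmert (negbTE k0) ltnNge (ltnW lt_ky) (gtn_eqF lt_ky : (y == k) = false).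
by rewrite mul0r subrr mul0r.
Qed.

Lemma helmert_norm n (k : 'I_n.+1) : dotv (helmert k) (helmert k) != 0.
Proof.
have [->|k0] := eqVneq k ord0.
  rewrite /dotv (eq_bigr (fun _ => 1)) => [|y _]; last by rewrite helmert0 mulr1.
  by rewrite sumr_const card_ord pnatr_eq0.
have sq y : helmert k y * helmert k y = (y < k)%:R + (y == k)%:R * (k * k)%:R.
  rewrite /helmert (negbTE k0).
  case: (ltngtP y k) => [lt_yk|gt_yk|/val_inj ->].
  - by rewrite (ltn_eqF lt_yk : (y == k) = false) !mul0r !subr0 mulr1 addr0.
  - by rewrite (gtn_eqF gt_yk : (y == k) = false) !mul0r subrr mul0r addr0.
  - by rewrite ?ltnn ?eqxx mulr0n mulr1n natrM; ring.
rewrite /dotv (eq_bigr _ (fun y _ => sq y)) big_split /= sum_ltn_ord.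
rewrite (sum_eq_mul k (fun _ => (k * k)%:R)) (minn_idPl (ltnW (ltn_ord k))) -natrD.
by rewrite pnatr_eq0 addn_eq0 negb_and -lt0n; apply/orP; left; rewrite lt0n.
Qed.

Lemma eigenbasis_empty m :
  lap_eigenbasis (G := empty_graph m.+1) ord0 (@helmert m) (fun _ => 0).
Proof.
apply: eigenbasis_edgeless => //; [exact: helmert_ortho | exact: helmert_norm].
Qed.

Lemma lap_row_complete m (q : 'I_m.+1 -> algC) y :
  lap_row (G := complete m.+1) q y = q y * (m.+1)%:R - \sum_x q x.
Proof.
rewrite lap_rowE natr_degree /=.
under [\sum_x (y != x)%:R]eq_bigr do rewrite eq_sym -[_%:R]mulr1.
under [\sum_x q x * _]eq_bigr do rewrite mulrC.
rewrite !sum_neq_mul sumr_const card_ord -natr1; ring.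
Qed.

Definition complete_eigval m (k : 'I_m.+1) : algC := if k == ord0 then 0 else (m.+1)%:R.

Lemma eigenbasis_complete m :
  lap_eigenbasis (G := complete m.+1) ord0 (@helmert m) (@complete_eigval m).
Proof.
split; [exact: helmert0 | by rewrite /complete_eigval eqxx | | exact: helmert_ortho |
  exact: helmert_norm].
move=> k y; rewrite lap_row_complete /complete_eigval.
have [->|k0] := eqVneq k ord0; last by rewrite sum_helmert // subr0 mulrC.
rewrite (eq_bigr (fun _ => 1)) => [|? _]; last exact: helmert0.
by rewrite sumr_const card_ord helmert0 mul1r subrr mul0r.
Qed.

Definition Hr_eigval s : vert (Hr s.+1) -> algC :=
  @union_eigval (empty_graph s.+1) (gjoin K1 (empty_graph s.+2)) (fun _ => 0)
    (@join_eigval K1 (empty_graph s.+2) tt ord0 (fun _ => 0) (fun _ => 0)).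
Arguments Hr_eigval : clear implicits.

Definition Gr_eigval s : vert (Gr s.+1) -> algC :=
  @join_eigval (Hr s.+1) (Hr s.+1) (inl ord0) (inl ord0) (Hr_eigval s) (Hr_eigval s).
Arguments Gr_eigval : clear implicits.

Lemma eigenbasis_Gr s :
  exists b, lap_eigenbasis (G := Gr s.+1) (inl (inl ord0)) b (Gr_eigval s).
Proof.
have eH := eigenbasis_union (eigenbasis_empty s)
  (eigenbasis_join eigenbasis_K1 (eigenbasis_empty s.+1)).
by eexists; exact: (eigenbasis_join eH eH).
Qed.

Lemma sum_unit (F : unit -> algC) : \sum_x F x = F tt.
Proof. by rewrite (big_pred1 tt) // => -[]. Qed.

Lemma card_Hr r : #|vert (Hr r)| = (2 * r + 2)%N.
Proof. by rewrite /= !card_sum card_unit !card_ord; lia. Qed.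

Lemma sum_Gr_eigval s (F : algC -> algC) :
  \sum_x F (Gr_eigval s x) =
  F 0 + F (4 * s.+1 + 4)%:R + (F (2 * s.+1 + 2)%:R + F (2 * s.+1 + 3)%:R) *+ (2 * s.+1)
  + F (3 * s.+1 + 4)%:R *+ 2.
Proof.
rewrite !big_sumType /= !big_ord_recl /= !sum_unit !sumr_const !card_ord !card_Hr.
rewrite card_unit !add0r -!natrD.
have -> : (1 + s.+2 + (2 * s.+1 + 2) = 3 * s.+1 + 4)%N by lia.
have -> : (1 + (2 * s.+1 + 2) = 2 * s.+1 + 3)%N by lia.
have -> : (2 * s.+1 + 2 + (2 * s.+1 + 2) = 4 * s.+1 + 4)%N by lia.
ring.
Qed.

Lemma normr_natrB (a b c : nat) : (b + c)%N = a -> `|a%:R - b%:R : algC| = c%:R.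
Proof. by move=> <-; rewrite natrD addrC addKr normr_nat. Qed.

Lemma irreflexive_Gr r : irreflexive (@adj (Gr r)).
Proof. by case=> [[x|[[]|x]]|[x|[[]|x]]]. Qed.

Lemma irreflexive_complete n : irreflexive (@adj (complete n)).
Proof. by move=> x; rewrite /= eqxx. Qed.

Lemma gorder_Gr r : gorder (Gr r) = (4 * r + 4)%N.
Proof. by rewrite /gorder /= card_sum card_Hr; lia. Qed.

Lemma LE_Gr s : LE (Gr s.+1) = (8 * s.+1 + 6)%:R.
Proof.
have [b eb] := eigenbasis_Gr s.
rewrite (LE_eigenbasis eb (@irreflexive_Gr _)) gorder_Gr.
have -> : (\sum_y Gr_eigval s y) / (4 * s.+1 + 4)%:R = (2 * s.+1 + 3)%:R.
  apply: (canLR (mulfK _)); first by rewrite pnatr_eq0 addn_eq0 andbF.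
  rewrite (sum_Gr_eigval s id) /=; ring.
rewrite (sum_Gr_eigval s (fun z => `|z - (2 * s.+1 + 3)%:R|)) /=.
have d1 : `|(4 * s.+1 + 4)%:R - (2 * s.+1 + 3)%:R| = (2 * s.+1 + 1)%:R :> algC.
  by apply: normr_natrB; lia.
have d2 : `|(2 * s.+1 + 2)%:R - (2 * s.+1 + 3)%:R| = 1%:R :> algC.
  by rewrite distrC; apply: normr_natrB; lia.
have d3 : `|(3 * s.+1 + 4)%:R - (2 * s.+1 + 3)%:R| = s.+2%:R :> algC.
  by apply: normr_natrB; lia.
by rewrite sub0r normrN normr_nat subrr normr0 d1 d2 d3; ring.
Qed.

Lemma lspec_complete n : (0 < n)%N -> perm_eq (lspec (complete n)) (0 :: nseq n.-1 n%:R).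
Proof.
case: n => // m _; apply: perm_trans (lspec_eigenbasis (eigenbasis_complete m)) _.
rewrite /= enum_ordSl /= {1}/complete_eigval eqxx -map_comp.
have/all_pred1P -> :
    all (pred1 (m.+1)%:R) (map (@complete_eigval m \o lift ord0) (enum 'I_m)).
  apply/allP => _ /mapP[i _ ->] /=.
  by rewrite /complete_eigval [lift _ _ == _]eq_sym (negbTE (neq_lift _ _)).
by rewrite size_map size_enum_ord.
Qed.

Lemma sum_complete_eigval m (F : algC -> algC) :
  \sum_k F (@complete_eigval m k) = F 0 + F (m.+1)%:R *+ m.
Proof.
rewrite big_ord_recl /complete_eigval eqxx.
by rewrite (eq_bigr (fun _ => F (m.+1)%:R)) ?sumr_const ?card_ord.
Qed.

Lemma LE_complete n : (0 < n)%N -> LE (complete n) = (2 * n - 2)%:R.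
Proof.
case: n => // m _.
rewrite (LE_eigenbasis (eigenbasis_complete m) (@irreflexive_complete _)).
have -> : gorder (complete m.+1) = m.+1 by rewrite /gorder card_ord.
have -> : (\sum_k @complete_eigval m k) / (m.+1)%:R = m%:R.
  apply: (canLR (mulfK _)); first by rewrite pnatr_eq0.
  by rewrite (sum_complete_eigval m id) /=; ring.
rewrite (sum_complete_eigval m (fun z => `|z - m%:R|)) /= sub0r normrN normr_nat.
rewrite (@normr_natrB _ _ 1) ?addn1 //.
have -> : (2 * m.+1 - 2 = m + m)%N by lia.
by rewrite natrD; ring.
Qed.

Lemma mem_lspec_Gr s : (2 * s.+1 + 2)%:R \in lspec (Gr s.+1).
Proof.
have [b eb] := eigenbasis_Gr s.
rewrite (perm_mem (lspec_eigenbasis eb)); apply/mapP.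
by exists (inl (inr (inl tt))); rewrite ?mem_enum //= card_Hr add0r.
Qed.

Theorem theorem2 (r : nat) (hr : (1 <= r)%N) :
  gorder (Gr r) = (4 * r + 4)%N /\
  LE (Gr r) = LE (complete (4 * r + 4)) /\
  LE (complete (4 * r + 4)) = (8 * r + 6)%:R /\
  ~ perm_eq (lspec (Gr r)) (lspec (complete (4 * r + 4))).
Proof.
case: r hr => // s _.
have LE_K : LE (complete (4 * s.+1 + 4)) = (8 * s.+1 + 6)%:R.
  by rewrite LE_complete ?addn4 //; congr _%:R; lia.
split; first exact: gorder_Gr.
split; first by rewrite LE_Gr LE_K.
split; first exact: LE_K.
move=> /perm_mem eq_spec; have := mem_lspec_Gr s.
rewrite eq_spec (perm_mem (lspec_complete _)) ?addn4 // inE mem_nseq.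
by rewrite pnatr_eq0 eqr_nat; lia.
Qed.
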